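(* Let $(b,c)$ be a connected graph over a countable set $X$, $G$ a nilpotent group acting cocompactly on $X$ with $H_{b,c}$ $G$-invariant, and $x_0\in X$. Let $R$ be a normal subgroup of $G$ and $Q(R)=\pi^{-1}(Z(G/R))$ with $\pi:G\to G/R$ the projection. Then every harmonic $k\in\mathrm{ex}\,\mathcal{K}^R$ is $Q(R)$-multiplicative.
   Context: A graph over $X$ is $(b,c)$ with $b:X\times X\to[0,\infty)$, $c:X\to\mathbb{R}$, $\sum_yb(x,y)<\infty$ ($b$ need not be symmetric); connected: any two points are joined by a finite sequence $y_1,\dots,y_n$ with $b(y_i,y_{i+1})>0$. $H_{b,c}f(x)=\sum_yb(x,y)(f(x)-f(y))+c(x)f(x)$ on $\mathrm{Dom}(H)=\{f:\sum_yb(x,y)|f(y)|<\infty\ \forall x\}$; harmonic: $Hf=0$; $\mathcal{H}^+$: nonnegative nonzero harmonic functions. $T_gf(x)=f(g^{-1}x)$; cocompact: $GV=X$ for some finite $V$; $H$ is $G$-invariant if $T_g$ preserves $\mathrm{Dom}(H)$ and $HT_g=T_gH$. $\mathcal{K}$ is the closure in $C(X)$ (product topology) of $\{f\in\mathcal{H}^+:f(x_0)=1\}$, $\mathcal{K}^R=\{f\in\mathcal{K}:T_rf=f\ \forall r\in R\}$, $\mathrm{ex}$ = extreme points. For a subgroup $S$, $f$ is $S$-multiplicative if there is a homomorphism $\gamma:S\to(0,\infty)$ with $T_gf=\gamma(g^{-1})f$ for all $g\in S$. *)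

From HB Require Import structures.
From mathcomp Require Import all_boot all_order all_algebra.
From mathcomp Require Import all_classical all_reals all_analysis.
From mathcomp Require Import monoid.
Set Implicit Arguments.
Unset Strict Implicit.
Unset Printing Implicit Defensive.
Import Order.TTheory GRing.Theory Num.Theory.
Import numFieldNormedType.Exports.
Local Open Scope classical_set_scope.
Local Open Scope ring_scope.

Definition is_subgroup (G : groupType) (S : set G) : Prop :=
  S 1%g /\ (forall x y, S x -> S y -> S (x * y^-1)%g).

Definition is_normal_subgroup (G : groupType) (N : set G) : Prop :=
  is_subgroup N /\ (forall x g, N x -> N (x ^ g)%g).

Inductive gen_subgroup (G : groupType) (A : set G) : G -> Prop :=
| gen_in a : A a -> gen_subgroup A a
| gen_one : gen_subgroup A 1%g
| gen_mul x y : gen_subgroup A x -> gen_subgroup A y -> gen_subgroup A (x * y)%g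
| gen_inv x : gen_subgroup A x -> gen_subgroup A (x^-1)%g.

Fixpoint lcs (G : groupType) (n : nat) : set G :=
  match n with
  | 0 => setT
  | n'.+1 => gen_subgroup (fun z => exists x g, @lcs G n' x /\ z = [~ x, g]%g)
  end.

Definition nilpotent_group (G : groupType) : Prop :=
  exists n, forall x : G, @lcs G n x -> x = 1%g.

(* Q(N) = pi^{-1}(Z(G/N)): g such that pi(g) commutes with every pi(h),
   i.e. [g,h] in N for all h *)
Definition Qpre (G : groupType) (N : set G) : set G :=
  [set g | forall h, N [~ g, h]%g].

Definition is_action (G : groupType) (X : Type) (act : G -> X -> X) : Prop :=
  (forall x, act 1%g x = x) /\
  (forall g h x, act (g * h)%g x = act g (act h x)).

Definition Tg (G : groupType) (X : Type) (R : Type) (act : G -> X -> X)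
  (g : G) (f : X -> R) : X -> R := fun x => f (act (g^-1)%g x).

Definition cocompact (G : groupType) (X : eqType) (act : G -> X -> X) : Prop :=
  exists V : seq X, forall x, exists g v, v \in V /\ x = act g v.

Definition is_graph (R : realType) (X : countType) (b : X -> X -> R) : Prop :=
  (forall x y, 0 <= b x y) /\
  (forall x, (\esum_(y in [set: X]) (b x y)%:E < +oo)%E).

Definition graph_connected (R : realType) (X : countType) (b : X -> X -> R) : Prop :=
  forall x y : X, exists s : seq X,
    path (fun u v => 0 < b u v) x s /\ last x s = y.

Definition DomH (R : realType) (X : countType) (b : X -> X -> R) (f : X -> R) : Prop :=
  forall x, (\esum_(y in [set: X]) (b x y * `|f y|)%:E < +oo)%E.

Definition rsum (R : realType) (X : countType) (g : X -> R) : R :=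
  fine (\esum_(y in [set: X]) (Num.max (g y) 0)%:E) -
  fine (\esum_(y in [set: X]) (Num.max (- g y) 0)%:E).

Definition Hop (R : realType) (X : countType) (b : X -> X -> R) (c : X -> R)
  (f : X -> R) : X -> R :=
  fun x => rsum (fun y => b x y * (f x - f y)) + c x * f x.

Definition harmonic_fn (R : realType) (X : countType) (b : X -> X -> R) (c : X -> R)
  (f : X -> R) : Prop :=
  DomH b f /\ (forall x, Hop b c f x = 0).

Definition Hplus (R : realType) (X : countType) (b : X -> X -> R) (c : X -> R) :
  set (X -> R) :=
  [set f | harmonic_fn b c f /\ (forall x, 0 <= f x) /\ (exists x, f x != 0)].

Definition G_invariant (R : realType) (X : countType) (G : groupType)
  (act : G -> X -> X) (b : X -> X -> R) (c : X -> R) : Prop :=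
  forall g f, DomH b f ->
    DomH b (Tg act g f) /\ Hop b c (Tg act g f) = Tg act g (Hop b c f).

Definition Kset (R : realType) (X : countType) (b : X -> X -> R) (c : X -> R)
  (x0 : X) : set (X -> R) :=
  closure ([set f | Hplus b c f /\ f x0 = 1] : set {ptws X -> R}).

Definition KsetR (R : realType) (X : countType) (G : groupType)
  (act : G -> X -> X) (b : X -> X -> R) (c : X -> R) (x0 : X) (N : set G) :
  set (X -> R) :=
  [set f | Kset b c x0 f /\ (forall r, N r -> Tg act r f = f)].

Definition extreme_point (R : realType) (X : Type) (S : set (X -> R)) (k : X -> R)
  : Prop :=
  S k /\ forall f1 f2 (t : R), S f1 -> S f2 -> 0 < t < 1 ->
    (forall x, k x = t * f1 x + (1 - t) * f2 x) -> f1 = f2.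

Definition multiplicative_on (R : realType) (X : Type) (G : groupType)
  (act : G -> X -> X) (S : set G) (f : X -> R) : Prop :=
  exists gamma : G -> R,
    (forall g, S g -> 0 < gamma g) /\
    (forall g h, S g -> S h -> gamma (g * h)%g = gamma g * gamma h) /\
    (forall g, S g -> Tg act g f = (fun x => gamma (g^-1)%g * f x)).

(* Let g be in Q(R) and u := T_g k, i.e. u x = k (g^-1 x).  For every a, g^-1 a equals
   [g, a^-1] (a g^-1) and the commutator lies in R, under which k is invariant; so
   u (a v) = k (a (g^-1 v)).  Harnack's inequality along a path from v to g^-1 v,
   applied to the harmonic translates k (a .), bounds this by C_v k (a v) uniformly in a,
   and cocompactness leaves finitely many v: u <= C k.  Hence w := k - u / (2C) is again
   a positive R-invariant harmonic function, and k is a proper convex combination of the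
   normalisations of u and w, both in K^R.  Extremality forces u = u(x0) k, and then
   g |-> k (g x0) is the multiplier. *)

From HB Require Import structures.
From mathcomp Require Import all_boot all_order all_algebra.
From mathcomp Require Import all_classical all_reals all_analysis.
From mathcomp Require Import monoid lra.
Set Implicit Arguments.
Unset Strict Implicit.
Unset Printing Implicit Defensive.
Import Order.TTheory GRing.Theory Num.Theory.
Import numFieldNormedType.Exports.
Local Open Scope classical_set_scope.
Local Open Scope ring_scope.

Lemma ge0_esumZl (R : realType) (T : choiceType) (D : set T) (r : R)
    (a : T -> \bar R) : 0 <= r -> (forall i, 0 <= a i)%E ->
  (\esum_(i in D) (r%:E * a i) = r%:E * \esum_(i in D) a i)%E.
Proof.
move=> r0 a0; rewrite /esum -ereal_supZl//.
  congr ereal_sup; rewrite image_comp; apply: eq_imagel => A _ /=.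
  by rewrite ge0_mule_fsumr.
by apply/set0P; exists 0%E, set0; rewrite ?fsbig_set0//; exact: fsets_set0.
Qed.

Section NonnegativeSums.
Variables (R : realType) (T : choiceType).
Implicit Types (p q : T -> R).

Definition finite_esum p := (\esum_(y in [set: T]) (p y)%:E < +oo)%E.
Definition esumR p : R := fine (\esum_(y in [set: T]) (p y)%:E).

Lemma finite_esumE p : (forall y, 0 <= p y) -> finite_esum p ->
  \esum_(y in [set: T]) (p y)%:E = (esumR p)%:E.
Proof.
move=> p0 fp; rewrite /esumR fineK// ge0_fin_numE//.
by apply: esum_ge0 => y _; rewrite lee_fin.
Qed.

Lemma finite_esum_le p q : (forall y, 0 <= p y) -> (forall y, p y <= q y) ->
  finite_esum q -> finite_esum p.
Proof.
by move=> p0 pq; apply: le_lt_trans; apply: le_esum => y _; rewrite lee_fin.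
Qed.

Lemma le_esumR p y : (forall y, 0 <= p y) -> finite_esum p -> p y <= esumR p.
Proof.
move=> p0 fp; rewrite -lee_fin -(finite_esumE p0 fp).
rewrite (esumID [set y]) ?setTI; last by move=> z _; rewrite lee_fin.
rewrite esum_set1 ?lee_fin// leeDl//.
by apply: esum_ge0 => z _; rewrite lee_fin.
Qed.

Lemma esumRD p q : (forall y, 0 <= p y) -> (forall y, 0 <= q y) ->
  finite_esum p -> finite_esum q -> esumR (fun y => p y + q y) = esumR p + esumR q.
Proof.
move=> p0 q0 fp fq; rewrite /esumR (eq_esum (b := fun y => (p y)%:E + (q y)%:E)%E)//.
by rewrite esumD ?(finite_esumE p0 fp) ?(finite_esumE q0 fq)// => y _; rewrite lee_fin.
Qed.

Section Scaling.
Variables (r : R) (p : T -> R).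
Hypotheses (r0 : 0 <= r) (p0 : forall y, 0 <= p y) (fp : finite_esum p).

Lemma esumZ_finE :
  \esum_(y in [set: T]) (r * p y)%:E = (r * esumR p)%:E.
Proof.
rewrite (eq_esum (b := fun y => r%:E * (p y)%:E)%E)//.
by rewrite ge0_esumZl ?(finite_esumE p0 fp)// => y; rewrite lee_fin.
Qed.

Lemma finite_esumZ : finite_esum (fun y => r * p y).
Proof. by rewrite /finite_esum esumZ_finE ltry. Qed.

Lemma esumRZ : esumR (fun y => r * p y) = r * esumR p.
Proof. by rewrite /esumR esumZ_finE. Qed.

End Scaling.
End NonnegativeSums.

Lemma rsumB (R : realType) (X : countType) (p q : X -> R) :
  (forall y, 0 <= p y) -> (forall y, 0 <= q y) -> finite_esum p -> finite_esum q ->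
  rsum (fun y => p y - q y) = esumR p - esumR q.
Proof.
move=> p0 q0 fp fq.
set P := fun y => Num.max (p y - q y) 0; set M := fun y => Num.max (- (p y - q y)) 0.
have P0 y : 0 <= P y by rewrite le_max lexx orbT.
have M0 y : 0 <= M y by rewrite le_max lexx orbT.
have fP : finite_esum P.
  by apply: finite_esum_le fp => // y; rewrite ge_max p0 andbT lerBlDr lerDl.
have fM : finite_esum M.
  by apply: finite_esum_le fq => // y; rewrite ge_max q0 andbT opprB lerBlDr lerDl.
have PM_rearranged y : P y + q y = p y + M y.
  rewrite /P /M; have [pq|qp] := leP (p y) (q y).
    by rewrite (max_r (x := p y - q y)) ?(max_l (x := - _)) ?oppr_ge0 ?subr_le0//; lra.
  by rewrite (max_l (x := p y - q y)) ?(max_r (x := - _)) ?oppr_le0 ?subr_ge0 ?ltW//; lra.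
have := congr1 (@esumR R X) (funext PM_rearranged).
rewrite !esumRD// /rsum -/(esumR P) -/(esumR M) => E.
by apply/eqP; rewrite subr_eq addrAC -E addrK.
Qed.

Section NonnegativeHarmonic.
Variables (R : realType) (X : countType) (b : X -> X -> R) (c : X -> R).
Hypothesis graph_b : is_graph b.

Let b_ge0 x y : 0 <= b x y. Proof. by case: graph_b. Qed.

Section OneFunction.
Variable f : X -> R.
Hypothesis f_ge0 : forall y, 0 <= f y.

Lemma DomH_ge0P : DomH b f <-> forall x, finite_esum (fun y => b x y * f y).
Proof.
have E x : \esum_(y in [set: X]) (b x y * `|f y|)%:E =
           \esum_(y in [set: X]) (b x y * f y)%:E.
  by apply: eq_esum => y _; rewrite ger0_norm.
by split=> D x; [rewrite /finite_esum -E | rewrite /DomH E]; exact: D.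
Qed.

Lemma Hop_ge0E x : DomH b f ->
  Hop b c f x = f x * esumR (b x) - esumR (fun y => b x y * f y) + c x * f x.
Proof.
move=> /DomH_ge0P Df; have fb : finite_esum (b x) := proj2 graph_b x.
rewrite /Hop -(esumRZ (f_ge0 x) (b_ge0 x) fb); congr (_ + _).
rewrite -rsumB ?finite_esumZ // => [|y|y]; rewrite ?mulr_ge0 //.
by congr rsum; apply: funext => y; rewrite mulrBr mulrC.
Qed.

Lemma harmonic_ge0P : harmonic_fn b c f <-> forall x,
  finite_esum (fun y => b x y * f y) /\
  esumR (fun y => b x y * f y) = (esumR (b x) + c x) * f x.
Proof.
split=> [[Df Hf] x | hf].
  split; first exact: (proj1 DomH_ge0P Df).
  by have := Hf x; rewrite Hop_ge0E //; lra.
have Df : DomH b f by apply/DomH_ge0P => x; exact: (hf x).1.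
by split=> // x; rewrite Hop_ge0E // (hf x).2; lra.
Qed.

End OneFunction.

Lemma harnack_edge x y : 0 < b x y -> exists D, 0 < D /\
  forall f, harmonic_fn b c f -> (forall z, 0 <= f z) -> f y <= D * f x.
Proof.
move=> bxy; exists (Num.max ((esumR (b x) + c x) / b x y) 1).
split=> [|f /harmonic_ge0P hf f0]; first by rewrite lt_max ltr01 orbT.
have [fbf Ebf] := hf f0 x.
have le_fy : f y <= (esumR (b x) + c x) / b x y * f x.
  rewrite mulrAC ler_pdivlMr // mulrC -Ebf.
  by apply: le_esumR fbf => z; rewrite mulr_ge0.
by apply: le_trans le_fy _; rewrite ler_wpM2r // le_max lexx.
Qed.

Lemma harnack_path x s : path (fun u v => 0 < b u v) x s -> exists C, 0 < C /\
  forall f, harmonic_fn b c f -> (forall z, 0 <= f z) -> f (last x s) <= C * f x.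
Proof.
elim: s x => [|y s IH] x /=.
  by move=> _; exists 1; split => // f _ _; rewrite mul1r.
move=> /andP[/harnack_edge[D [D0 HD]] /IH[C [C0 HC]]].
exists (C * D); split=> [|f hf f0]; first exact: mulr_gt0.
rewrite -mulrA; apply: le_trans (HC f hf f0) _.
by apply: ler_wpM2l; [exact: ltW | exact: HD].
Qed.

Lemma harmonic_ge0_comb f g h (al be : R) :
  harmonic_fn b c f -> harmonic_fn b c g ->
  (forall y, 0 <= f y) -> (forall y, 0 <= g y) -> (forall y, 0 <= h y) ->
  0 <= al -> 0 <= be -> (forall y, h y + be * g y = al * f y) ->
  harmonic_fn b c h.
Proof.
move=> /harmonic_ge0P hf /harmonic_ge0P hg f0 g0 h0 al0 be0 hgf.
apply/harmonic_ge0P => // x.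
have [fbf Ebf] := hf f0 x; have [fbg Ebg] := hg g0 x.
have bh0 y : 0 <= b x y * h y by rewrite mulr_ge0.
have bg0 y : 0 <= b x y * g y by rewrite mulr_ge0.
have bf0 y : 0 <= b x y * f y by rewrite mulr_ge0.
have bhgf y : b x y * h y + be * (b x y * g y) = al * (b x y * f y).
  by rewrite mulrCA -mulrDr hgf mulrCA.
have fbh : finite_esum (fun y => b x y * h y).
  apply: finite_esum_le bh0 _ (finite_esumZ al0 bf0 fbf) => y.
  by rewrite -bhgf lerDl mulr_ge0.
split=> //.
have := congr1 (@esumR R X) (funext bhgf).
rewrite esumRD ?finite_esumZ // => [|y]; last by rewrite mulr_ge0.
rewrite !esumRZ // Ebf Ebg; have := hgf x; nra.
Qed.

End NonnegativeHarmonic.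

Lemma closure_ptws_eval (R : realType) (X : choiceType) (A : set {ptws X -> R})
    (x : X) (C : set R) : closed C ->
  (forall f, A f -> C (f x)) -> forall f, closure A f -> C (f x).
Proof.
move=> cC AC f Af.
have cl : closed ((@proj X (fun _ => R) x @^-1` C) : set {ptws X -> R}).
  apply: preimage_closed => //= g _; exact: proj_continuous.
have sub : A `<=` ((@proj X (fun _ => R) x @^-1` C) : set {ptws X -> R}).
  by move=> g /AC.
by have := closureS sub Af; rewrite -(closure_id _).1.
Qed.

Lemma subgroupV (G : groupType) (S : set G) x : is_subgroup S -> S x -> S x^-1%g.
Proof. by move=> [S1 SB] Sx; have := SB 1%g x S1 Sx; rewrite mul1g. Qed.

Section ExtremeHarmonic.
Variables (R : realType) (X : countType) (G : groupType) (b : X -> X -> R) (c : X -> R)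
  (act : G -> X -> X) (x0 : X) (N : set G).
Hypotheses (graph_b : is_graph b) (conn : graph_connected b) (hact : is_action act)
  (cocomp : cocompact act) (Ginv : G_invariant act b c) (hN : is_normal_subgroup N).
Variable k : X -> R.
Hypotheses (hk : harmonic_fn b c k) (ek : extreme_point (KsetR act b c x0 N) k).

Let act1 x : act 1%g x = x. Proof. by case: hact. Qed.
Let actM g h x : act (g * h)%g x = act g (act h x). Proof. by case: hact. Qed.

Definition N_invariant (f : X -> R) := forall r, N r -> Tg act r f = f.

Lemma N_invariantE f r x : N_invariant f -> N r -> f (act r^-1%g x) = f x.
Proof. by move=> fN Nr; have := congr1 (fun h => h x) (fN r Nr). Qed.

Lemma TgM g h (f : X -> R) : Tg act (g * h)%g f = Tg act g (Tg act h f).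
Proof. by apply: funext => x; rewrite /Tg invgM actM. Qed.

Lemma N_invariant_Tg g f : N_invariant f -> N_invariant (Tg act g f).
Proof.
by move=> fN r Nr; rewrite -TgM conjgC TgM fN //; exact: hN.2.
Qed.

Lemma harmonic_Tg g f : harmonic_fn b c f -> harmonic_fn b c (Tg act g f).
Proof.
move=> [Df Hf]; have [DTf HTf] := Ginv g Df.
by split=> // x; rewrite HTf /Tg Hf.
Qed.

Lemma k_actN r z : N r -> k (act r z) = k z.
Proof.
by move=> Nr; rewrite -[r]invgK; exact: N_invariantE ek.1.2 (subgroupV hN.1 Nr).
Qed.

Lemma k_ge0 x : 0 <= k x.
Proof.
apply: (closure_ptws_eval (C := [set r | 0 <= r])) ek.1.1; first exact: closed_ge.
by move=> f [[_ [f0 _]] _]; exact: f0.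
Qed.

Lemma k_x0 : k x0 = 1.
Proof.
apply: (closure_ptws_eval (C := [set r | r = 1])) ek.1.1; first exact: closed_eq.
by move=> f [].
Qed.

Lemma harnack_translates v w : exists C, 0 < C /\
  forall a, k (act a w) <= C * k (act a v).
Proof.
have [s [path_s <-]] := conn v w.
have [C [C0 HC]] := harnack_path c graph_b path_s.
exists C; split=> // a; apply: (HC (fun x => k (act a x))) => [|z]; last exact: k_ge0.
have -> : (fun x => k (act a x)) = Tg act a^-1%g k.
  by apply: funext => x; rewrite /Tg invgK.
exact: harmonic_Tg.
Qed.

Lemma harnack_translates_seq (s : seq X) (F : X -> X) : exists C, 0 < C /\
  forall v, v \in s -> forall a, k (act a (F v)) <= C * k (act a v).
Proof.
elim: s => [|v s [C [C0 HC]]]; first by exists 1; split => // v; rewrite in_nil.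
have [D [D0 HD]] := harnack_translates v (F v).
exists (Num.max C D); split=> [|w]; first by rewrite lt_max C0.
rewrite in_cons => /orP[/eqP -> | ws] a.
  by apply: le_trans (HD a) _; rewrite ler_wpM2r ?k_ge0 // le_max lexx orbT.
by apply: le_trans (HC w ws a) _; rewrite ler_wpM2r ?k_ge0 // le_max lexx.
Qed.

Lemma k_gt0 y : 0 < k y.
Proof.
have [C [C0 HC]] := harnack_translates y x0.
have := HC 1%g; rewrite !act1 k_x0 => le1Cky.
by rewrite -(pmulr_rgt0 _ C0); apply: lt_le_trans le1Cky.
Qed.

Lemma Tg_Q_le g : Qpre N g -> exists C, 0 < C /\ forall x, Tg act g k x <= C * k x.
Proof.
move=> Qg; have [V HV] := cocomp.
have [C [C0 HC]] := harnack_translates_seq V (act g^-1%g).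
exists C; split=> // x; have [a [v [vV ->]]] := HV x.
(* g^-1 a = [g, a^-1] (a g^-1), and the commutator lies in N. *)
by rewrite /Tg -actM commgCV invgK actM k_actN ?actM; [exact: HC | exact: Qg].
Qed.

Lemma KsetR_normalized f : harmonic_fn b c f -> (forall x, 0 <= f x) -> 0 < f x0 ->
  N_invariant f -> KsetR act b c x0 N (fun x => (f x0)^-1 * f x).
Proof.
move=> hf f0 fx0 fN; have fx0' : 0 <= (f x0)^-1 by rewrite invr_ge0 ltW.
have nf0 x : 0 <= (f x0)^-1 * f x by rewrite mulr_ge0.
split=> [|r Nr]; last by apply: funext => x; rewrite /Tg N_invariantE.
apply: subset_closure; split; last by rewrite mulVf ?gt_eqF.
split; last by split=> //; exists x0; rewrite mulVf ?gt_eqF ?oner_neq0.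
apply: (harmonic_ge0_comb graph_b hf hf f0 f0 nf0 fx0' (lexx 0)) => y.
by rewrite mul0r addr0.
Qed.

Lemma extreme_dominated_proportional u C :
  harmonic_fn b c u -> (forall x, 0 <= u x) -> 0 < u x0 -> N_invariant u ->
  0 < C -> (forall x, u x <= C * k x) -> forall x, u x = u x0 * k x.
Proof.
move=> hu u0 ux0 uN C0 uCk.
pose e := C^-1 / 2; have e0 : 0 < e by rewrite divr_gt0 ?invr_gt0.
have eC : e * C = 1 / 2 by rewrite /e mulrAC mulVf ?gt_eqF.
pose w x := k x - e * u x.
have half_k_le_w x : k x / 2 <= w x.
  have : e * u x <= e * (C * k x) by rewrite ler_pM2l.
  by rewrite mulrA eC /w; have := k_ge0 x; lra.
have w0 x : 0 <= w x by apply: le_trans (half_k_le_w x); rewrite divr_ge0 ?k_ge0.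
have wx0 : 0 < w x0 by apply: lt_le_trans (half_k_le_w x0); rewrite k_x0; lra.
have hw : harmonic_fn b c w.
  apply: (harmonic_ge0_comb graph_b hk hu k_ge0 u0 w0 ler01 (ltW e0)) => y.
  by rewrite /w mul1r subrK.
have wN : N_invariant w.
  by move=> r Nr; apply: funext => x; rewrite /Tg /w !N_invariantE //; exact: ek.1.2.
pose t := e * u x0; have t_w : 1 - t = w x0 by rewrite /w k_x0.
have t01 : 0 < t < 1 by rewrite mulr_gt0 //= -subr_gt0 t_w.
have k_comb x : k x = t * ((u x0)^-1 * u x) + (1 - t) * ((w x0)^-1 * w x).
  rewrite t_w /t !mulrA -(mulrA e) mulfV ?gt_eqF // mulr1 mulfV ?gt_eqF //.
  by rewrite /w; lra.
have eq_uw := ek.2 _ _ t (KsetR_normalized hu u0 ux0 uN)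
  (KsetR_normalized hw w0 wx0 wN) t01 k_comb.
move=> x; have /= eq_uw_x := congr1 (fun f => f x) eq_uw.
rewrite k_comb -eq_uw_x -mulrDl subrKC mul1r mulrA mulfV ?gt_eqF //.
by rewrite mul1r.
Qed.

Lemma Tg_Q_proportional g : Qpre N g -> forall x, Tg act g k x = Tg act g k x0 * k x.
Proof.
move=> Qg; have [C [C0 le_uCk]] := Tg_Q_le Qg.
apply: (extreme_dominated_proportional _ _ _ _ C0 le_uCk).
- exact: harmonic_Tg.
- by move=> x; exact: k_ge0.
- exact: k_gt0.
- exact/N_invariant_Tg/ek.1.2.
Qed.

Lemma k_actQ g y : Qpre N g -> k (act g y) = k (act g x0) * k y.
Proof.
move=> Qg; have k_y z : k z = k (act g^-1%g x0) * k (act g z).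
  by have := Tg_Q_proportional Qg (act g z); rewrite /Tg -actM mulVg act1.
have := k_y x0; rewrite k_x0 => k_g_x0.
by rewrite [k y]k_y mulrA [k (act g x0) * _]mulrC -k_g_x0 mul1r.
Qed.

Lemma extreme_harmonic_multiplicative : multiplicative_on act (Qpre N) k.
Proof.
exists (fun h => k (act h x0)); split; [|split].
- by move=> g _; exact: k_gt0.
- by move=> g h Qg _; rewrite actM k_actQ.
- by move=> g Qg; apply: funext => x; rewrite Tg_Q_proportional.
Qed.

End ExtremeHarmonic.

Theorem lemma5 (R : realType) (X : countType) (G : groupType)
  (b : X -> X -> R) (c : X -> R) (act : G -> X -> X) (x0 : X) (N : set G) :
  is_graph b -> graph_connected b ->
  is_action act -> nilpotent_group G -> cocompact act ->
  G_invariant act b c ->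
  is_normal_subgroup N ->
  forall k : X -> R, harmonic_fn b c k ->
    extreme_point (KsetR act b c x0 N) k ->
    multiplicative_on act (Qpre N) k.
Proof.
move=> graph_b conn hact _ cocomp Ginv hN k hk ek.
exact: (extreme_harmonic_multiplicative graph_b conn hact cocomp Ginv hN hk ek).
Qed.
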